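(* Let $\mathcal{I}$ be a finite set of items and $\mathcal{D}$ a transaction database over $\mathcal{I}$. Let $t_o \in \mathcal{D}$ be a transaction with itemset $T_o \subseteq \mathcal{I}$, and let $\mathcal{D}^- = \mathcal{D} \setminus \{t_o\}$. Define the obsolete closed itemsets $\mathcal{C}_O(\mathcal{D}) = \mathcal{C}(\mathcal{D}) \setminus \mathcal{C}(\mathcal{D}^-)$ and the demoted closed itemsets $\mathcal{C}_D(\mathcal{D}) = \{c \in \mathcal{C}(\mathcal{D}) \cap \mathcal{C}(\mathcal{D}^-) \mid \sigma_{\mathcal{D}^-}(c) = \sigma_{\mathcal{D}}(c) - 1\}$. Then $$\Delta(\mathcal{D}, t_o) := \{T_o \cap c \mid c \in \mathcal{C}(\mathcal{D})\} = \mathcal{C}_O(\mathcal{D}) \cup \mathcal{C}_D(\mathcal{D}).$$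
   Context: A transaction database $\mathcal{D}$ over a finite item set $\mathcal{I}$ is a finite set of transactions, each a pair $(j, Z)$ with $j$ a transaction identifier (tid, all tids distinct) and $Z \subseteq \mathcal{I}$ an itemset. For $X \subseteq \mathcal{I}$, its support set is $\tau_{\mathcal{D}}(X) = \{ j \mid (j,Z) \in \mathcal{D},\ X \subseteq Z\}$ and its support is $\sigma_{\mathcal{D}}(X) = |\tau_{\mathcal{D}}(X)|$. An itemset $X \subseteq \mathcal{I}$ is closed in $\mathcal{D}$ if no proper superset $Y \supsetneq X$ (with $Y \subseteq \mathcal{I}$) has $\sigma_{\mathcal{D}}(Y) = \sigma_{\mathcal{D}}(X)$; $\mathcal{C}(\mathcal{D})$ denotes the family of all closed itemsets of $\mathcal{D}$ (in particular $\mathcal{I}$ itself is always closed). *)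

From mathcomp Require Import all_boot.
Set Implicit Arguments. Unset Strict Implicit. Unset Printing Implicit Defensive.

Section TDB.
Variables (J I : finType).
(* A transaction database: a finite set of (tid, itemset) pairs. *)
Definition tdb := {set (J * {set I})}.

Definition distinct_tids (D : tdb) : Prop :=
  forall t1 t2, t1 \in D -> t2 \in D -> t1.1 = t2.1 -> t1 = t2.

Definition supset (D : tdb) (X : {set I}) : {set J} :=
  [set j | [exists Z : {set I}, ((j, Z) \in D) && (X \subset Z)]].
Definition supp (D : tdb) (X : {set I}) : nat := #|supset D X|.

Definition closedb (D : tdb) (X : {set I}) : bool :=
  [forall Y : {set I}, (X \proper Y) ==> (supp D Y != supp D X)].

Definition closed_sets (D : tdb) : {set {set I}} := [set X | closedb D X].
End TDB.

From mathcomp Require Import all_boot.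
Set Implicit Arguments. Unset Strict Implicit. Unset Printing Implicit Defensive.

(* Removing t_o = (j_o, T_o) deletes j_o from tau(X) exactly when X is a
   subset of T_o, so sigma drops by one on subsets of T_o and is unchanged
   elsewhere.  Hence a closed itemset not contained in T_o stays closed with
   the same support, and every obsolete or demoted itemset c satisfies
   c = T_o :&: c.  Conversely T_o :&: c is closed whenever c is: with distinct
   tids, tau(X :|: Y) = tau(X) :&: tau(Y); a proper superset Y of T_o :&: c
   with the same support contains j_o in its support, hence lies in T_o, and
   then c :|: Y would be a proper superset of c with the support of c. *)

Section Support.
Variables (J I : finType).

Lemma supsetS (E : tdb J I) (X Y : {set I}) :
  X \subset Y -> supset E Y \subset supset E X.
Proof.
move=> sXY; apply/subsetP=> j; rewrite !inE => /existsP[Z /andP[jZ sYZ]].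
by apply/existsP; exists Z; rewrite jZ (subset_trans sXY sYZ).
Qed.

Lemma supp_eq_supset (E : tdb J I) (X Y : {set I}) :
  X \subset Y -> supp E Y = supp E X -> supset E Y = supset E X.
Proof. by rewrite /supp => sXY eq_supp; apply/eqP; rewrite eqEcard supsetS // eq_supp leqnn. Qed.

Lemma closedP (E : tdb J I) (X : {set I}) :
  reflect (forall Y : {set I}, X \proper Y -> supp E Y != supp E X) (closedb E X).
Proof.
apply: (iffP forallP) => closedX Y; first by move=> pXY; have := closedX Y; rewrite pXY.
exact/implyP/closedX.
Qed.

Lemma supsetU (D : tdb J I) (X Y : {set I}) :
  distinct_tids D -> supset D (X :|: Y) = supset D X :&: supset D Y.
Proof.
move=> tidsD; apply/setP=> j; rewrite !inE; apply/existsP/andP.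
  move=> [Z /andP[jZ]]; rewrite subUset => /andP[sXZ sYZ].
  by split; apply/existsP; exists Z; rewrite jZ.
case=> /existsP[Z1 /andP[jZ1 sXZ1]] /existsP[Z2 /andP[jZ2 sYZ2]].
case: (tidsD _ _ jZ1 jZ2 erefl) => eqZ; rewrite -eqZ in sYZ2.
by exists Z1; rewrite jZ1 subUset sXZ1 sYZ2.
Qed.

End Support.

Section RemoveTransaction.
Variables (J I : finType) (D : tdb J I) (to : J * {set I}).
Hypothesis tidsD : distinct_tids D.
Hypothesis toD : to \in D.

Lemma tid_notin_supset_setD1 (X : {set I}) : to.1 \notin supset (D :\ to) X.
Proof.
rewrite inE; apply/existsP => -[Z /andP[]]; rewrite !inE => /andP[ne_to ZD] _.
by rewrite (tidsD ZD toD erefl) eqxx in ne_to.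
Qed.

Lemma tid_in_supset (X : {set I}) : (to.1 \in supset D X) = (X \subset to.2).
Proof.
rewrite inE; apply/existsP/idP => [[Z /andP[ZD sXZ]]|sXto].
  by rewrite -(tidsD ZD toD erefl).
by exists to.2; rewrite -surjective_pairing toD.
Qed.

Lemma supset_setD1 (X : {set I}) :
  supset D X = supset (D :\ to) X :|: (if X \subset to.2 then [set to.1] else set0).
Proof.
apply/setP=> j; rewrite in_setU; case: (eqVneq j to.1) => [->|ne_j].
  rewrite tid_in_supset (negPf (tid_notin_supset_setD1 X)).
  by case: (X \subset to.2); rewrite ?inE ?eqxx.
have -> : j \in (if X \subset to.2 then [set to.1] else set0) = false.
  by case: ifP; rewrite ?inE ?(negPf ne_j).
rewrite orbF !inE; apply/existsP/existsP => -[Z /andP[ZD sXZ]]; exists Z; rewrite sXZ andbT.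
  by rewrite !inE ZD andbT; apply: contraNneq ne_j => <-.
by move: ZD; rewrite !inE => /andP[].
Qed.

Lemma supp_setD1 (X : {set I}) : supp D X = supp (D :\ to) X + (X \subset to.2).
Proof.
rewrite /supp supset_setD1; case: (X \subset to.2); last by rewrite setU0 addn0.
by rewrite setUC cardsU1 tid_notin_supset_setD1 addnC.
Qed.

Lemma closedb_setD1 (X : {set I}) :
  ~~ (X \subset to.2) -> closedb D X -> closedb (D :\ to) X.
Proof.
move=> nsXto /closedP closedX; apply/closedP => Y pXY.
have nsYto : ~~ (Y \subset to.2).
  by apply: contra nsXto; apply: subset_trans (proper_sub pXY).
by move: (closedX Y pXY); rewrite !supp_setD1 (negPf nsXto) (negPf nsYto) !addn0.
Qed.

Lemma closedb_setI_itemset (c : {set I}) : closedb D c -> closedb D (to.2 :&: c).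
Proof.
move=> /closedP closedc; apply/closedP => Y pXY; apply/negP => /eqP eq_supp.
have eq_supset := supp_eq_supset (proper_sub pXY) eq_supp.
have sYto : Y \subset to.2 by rewrite -tid_in_supset eq_supset tid_in_supset subsetIl.
have pc : c \proper c :|: Y.
  rewrite properUl //; apply: contraL (pXY) => sYc.
  by rewrite properEneq negb_and negbK eqEsubset (proper_sub pXY) subsetI sYto sYc.
have := closedc _ pc; rewrite /supp supsetU // eq_supset.
by rewrite (setIidPl (supsetS _ (subsetIr _ _))) eqxx.
Qed.

Lemma closed_changed_sub_itemset (X : {set I}) :
  closedb D X -> ~~ closedb (D :\ to) X || (supp (D :\ to) X + 1 == supp D X) ->
  X \subset to.2.
Proof.
move=> closedX /orP[nclosedX|].
  by apply: contraR nclosedX => /closedb_setD1/(_ closedX).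
by rewrite supp_setD1 eqn_add2l; case: (X \subset to.2).
Qed.

End RemoveTransaction.

Theorem mainTheorem1 (J I : finType) (D : tdb J I) (to : J * {set I}) :
  distinct_tids D -> to \in D ->
  let Dm := D :\ to in
  let To := to.2 in
  [set To :&: c | c in closed_sets D] =
    (closed_sets D :\: closed_sets Dm)
    :|: [set c in closed_sets D :&: closed_sets Dm | supp Dm c + 1 == supp D c].
Proof.
move=> tidsD toD /=; apply/setP => X; rewrite !inE.
apply/imsetP/idP => [[c]|].
  rewrite inE => closedc ->.
  rewrite (closedb_setI_itemset tidsD toD closedc) (supp_setD1 tidsD toD) subsetIl eqxx.
  by case: closedb.
move=> /orP[/andP[nclosedX closedX]|/andP[/andP[closedX _] dropX]];
  exists X; rewrite ?inE //; apply/esym/setIidPr;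
  by apply: (closed_changed_sub_itemset tidsD toD closedX); rewrite ?nclosedX ?dropX ?orbT.
Qed.
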